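(* Let $\alpha\in\mathbb C$, $\alpha\neq0$, and let $|\xi\rangle=\frac{a^\dagger|\alpha\rangle}{\sqrt{1+|\alpha|^2}}$ be the (normalized) photon-added coherent state, so that $\lambda_0=0$. Set $\beta=\alpha/\sqrt2$ and $|\psi^\perp\rangle=(a^\dagger-\beta^* )|\beta\rangle$ (a unit vector orthogonal to $|\beta\rangle$). Take Bob's measurement $\Pi^B_0=\sum_{m\ge0}|2m\rangle\langle2m|$, $\Pi^B_1=\sum_{m\ge0}|2m+1\rangle\langle2m+1|$, and any two-outcome projective measurement $\{\Pi^A_0,\Pi^A_1\}$ for Alice with $\Pi^A_1|\beta\rangle=|\beta\rangle$ and $\Pi^A_0|\psi^\perp\rangle=|\psi^\perp\rangle$. Then $P(0,0|0,0)=P(0,0|1,1)=\frac{1+e^{-|\alpha|^2}}{2(1+|\alpha|^2)}$, $P(1,1|0,1)=P(1,1|1,0)=\frac{1+2|\alpha|^2+e^{-|\alpha|^2}}{2(1+|\alpha|^2)}$, and therefore $\mathcal J=\frac12+\frac{e^{-|\alpha|^2}}{2(1+|\alpha|^2)}>\frac12$.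
   Context: Modes $A$ and $B$ have annihilation operators $a,b$ and Fock states $|n\rangle$; $|\gamma\rangle=e^{-|\gamma|^2/2}\sum_n\frac{\gamma^n}{\sqrt{n!}}|n\rangle$ is a coherent state. For a normalized single-mode state $|\xi\rangle=\sum_n\lambda_n|n\rangle$ with $|\lambda_0|<1$ and input bits $x,y\in\{0,1\}$, the phase-encoded generalized NOON state is $|\Phi_{xy}\rangle=\mathcal N_{xy}^{-1/2}\big((-1)^x|\xi\rangle_A|0\rangle_B+(-1)^y|0\rangle_A|\xi\rangle_B\big)$ with $\mathcal N_{xy}=2(1+(-1)^{x+y}|\lambda_0|^2)$. The lossless 50:50 beam splitter is the unitary $U$ with $U|0,0\rangle=|0,0\rangle$, $Ua^\dagger U^\dagger=(a^\dagger+b^\dagger)/\sqrt2$, $Ub^\dagger U^\dagger=(a^\dagger-b^\dagger)/\sqrt2$; set $|\Phi''_{xy}\rangle=U|\Phi_{xy}\rangle$. For two-outcome projective measurements $\{\Pi^A_0,\Pi^A_1\}$ on mode $A$, $\{\Pi^B_0,\Pi^B_1\}$ on mode $B$, $P(a,b|x,y)=\langle\Phi''_{xy}|\Pi^A_a\otimes\Pi^B_b|\Phi''_{xy}\rangle$ and $\mathcal J=\frac14\big[P(0,0|0,0)+P(0,0|1,1)+P(1,1|0,1)+P(1,1|1,0)\big]$. *)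

From Stdlib Require Import Reals Lra Arith.
Open Scope R_scope.

Record Cx := mkC { Re : R ; Im : R }.
Definition RtoC (r : R) : Cx := mkC r 0.
Definition C0 : Cx := RtoC 0.
Definition C1 : Cx := RtoC 1.
Definition Cadd (z w : Cx) : Cx := mkC (Re z + Re w) (Im z + Im w).
Definition Copp (z : Cx) : Cx := mkC (- Re z) (- Im z).
Definition Csub (z w : Cx) : Cx := Cadd z (Copp w).
Definition Cmul (z w : Cx) : Cx :=
  mkC (Re z * Re w - Im z * Im w) (Re z * Im w + Im z * Re w).
Definition Cconj (z : Cx) : Cx := mkC (Re z) (- Im z).
Definition Cnorm2 (z : Cx) : R := Re z * Re z + Im z * Im z.
Fixpoint Cpow (z : Cx) (n : nat) : Cx :=
  match n with O => C1 | S k => Cmul z (Cpow z k) end.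
Fixpoint Csum (f : nat -> Cx) (n : nat) : Cx :=
  match n with O => C0 | S k => Cadd (Csum f k) (f k) end.
Fixpoint Rsum (f : nat -> R) (n : nat) : R :=
  match n with O => 0 | S k => Rsum f k + f k end.
Definition Ccv (s : nat -> Cx) (z : Cx) : Prop :=
  Un_cv (fun N => Re (s N)) (Re z) /\ Un_cv (fun N => Im (s N)) (Im z).

Definition vec := nat -> Cx.
Definition l2 (u : vec) : Prop :=
  exists l, Un_cv (fun N => Rsum (fun n => Cnorm2 (u n)) N) l.
Definition inner_is (u v : vec) (z : Cx) : Prop :=
  Ccv (fun N => Csum (fun n => Cmul (Cconj (u n)) (v n)) N) z.

Definition is_projection (P : vec -> vec) : Prop :=
  (forall u, l2 u -> l2 (P u)) /\
  (forall u v, l2 u -> l2 v -> forall n,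
      P (fun i => Cadd (u i) (v i)) n = Cadd (P u n) (P v n)) /\
  (forall c u, l2 u -> forall n, P (fun i => Cmul c (u i)) n = Cmul c (P u n)) /\
  (forall u, l2 u -> forall n, P (P u) n = P u n) /\
  (forall u v z, l2 u -> l2 v -> inner_is (P u) v z -> inner_is u (P v) z).

Definition proj_meas (P0 P1 : vec -> vec) : Prop :=
  is_projection P0 /\ is_projection P1 /\
  (forall u, l2 u -> forall n, Cadd (P0 u n) (P1 u n) = u n).

(* creation operator a^dagger : |n> -> sqrt(n+1) |n+1> *)
Definition adag (u : vec) : vec := fun n =>
  match n with O => C0 | S k => Cmul (RtoC (sqrt (INR n))) (u k) end.

Definition coh (g : Cx) : vec := fun n =>
  Cmul (RtoC (exp (- Cnorm2 g / 2) / sqrt (INR (fact n)))) (Cpow g n).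

Definition xi_pa (al : Cx) : vec := fun n =>
  Cmul (RtoC (/ sqrt (1 + Cnorm2 al))) (adag (coh al) n).

Definition beta (al : Cx) : Cx := Cmul (RtoC (/ sqrt 2)) al.
Definition psiperp (al : Cx) : vec := fun n =>
  Csub (adag (coh (beta al)) n) (Cmul (Cconj (beta al)) (coh (beta al) n)).

Definition parityP (b : bool) (u : vec) : vec := fun n =>
  if Bool.eqb (Nat.odd n) b then u n else C0.

Definition vec2 := nat -> nat -> Cx.
Definition sgnR (x : bool) : R := if x then -1 else 1.
Definition delta0 (n : nat) : Cx := match n with O => C1 | S _ => C0 end.

Definition NOON (xi : vec) (x y : bool) : vec2 := fun m n =>
  let N := 2 * (1 + sgnR (xorb x y) * Cnorm2 (xi O)) in
  Cmul (RtoC (/ sqrt N))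
    (Cadd (Cmul (RtoC (sgnR x)) (Cmul (xi m) (delta0 n)))
          (Cmul (RtoC (sgnR y)) (Cmul (delta0 m) (xi n)))).

Definition Acr (psi : vec2) : vec2 := fun p q =>
  match p with O => C0 | S k => Cmul (RtoC (sqrt (INR p))) (psi k q) end.
Definition Bcr (psi : vec2) : vec2 := fun p q =>
  match q with O => C0 | S k => Cmul (RtoC (sqrt (INR q))) (psi p k) end.
Definition Cplus (psi : vec2) : vec2 := fun p q =>
  Cmul (RtoC (/ sqrt 2)) (Cadd (Acr psi p q) (Bcr psi p q)).
Definition Cminus (psi : vec2) : vec2 := fun p q =>
  Cmul (RtoC (/ sqrt 2)) (Csub (Acr psi p q) (Bcr psi p q)).
Definition vac2 : vec2 := fun p q => Cmul (delta0 p) (delta0 q).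

(* U|m,n> = U (a^dag)^m (b^dag)^n/sqrt(m!n!) |0,0>
          = ((a^dag+b^dag)/sqrt2)^m ((a^dag-b^dag)/sqrt2)^n /sqrt(m!n!) |0,0> *)
Definition Ubasis (m n : nat) : vec2 := fun p q =>
  Cmul (RtoC (/ sqrt (INR (fact m * fact n))))
       (Nat.iter m Cplus (Nat.iter n Cminus vac2) p q).

(* (U psi)(p,q) = sum_{m,n} <p,q|U|m,n> psi(m,n); U conserves total photon
   number, so only the terms with m + n = p + q are nonzero. *)
Definition BS (psi : vec2) : vec2 := fun p q =>
  Csum (fun m => Cmul (Ubasis m (p + q - m)%nat p q) (psi m (p + q - m)%nat))
       (S (p + q)).

(* tensor product of single-mode operators: (X (x) Y) = (X (x) I)(I (x) Y) *)
Definition tensor (X Y : vec -> vec) (psi : vec2) : vec2 := fun p q =>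
  X (fun p' => Y (fun q' => psi p' q') q) p.

(* <psi|M|psi> = z : the double series over N x N (square partial sums)
   converges to z *)
Definition expect_is (psi : vec2) (M : vec2 -> vec2) (z : Cx) : Prop :=
  Ccv (fun N => Csum (fun p => Csum (fun q =>
          Cmul (Cconj (psi p q)) (M psi p q)) N) N) z.

Definition Prob (al : Cx) (P0 P1 : vec -> vec) (a b x y : bool) (z : Cx) : Prop :=
  expect_is (BS (NOON (xi_pa al) x y))
            (tensor (if a then P1 else P0) (parityP b)) z.

Definition J_is (al : Cx) (P0 P1 : vec -> vec) (z : Cx) : Prop :=
  exists z1 z2 z3 z4,
    Prob al P0 P1 false false false false z1 /\
    Prob al P0 P1 false false true true z2 /\
    Prob al P0 P1 true true false true z3 /\
    Prob al P0 P1 true true true false z4 /\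
    z = Cmul (RtoC (/ 4)) (Cadd (Cadd z1 z2) (Cadd z3 z4)).

(* The exponential series and its first two moments give
      [sum_n w(n) conj(u n) (v n)] for [u, v] in [{|g>, a^dag|g>}] and the weights
      [w(n) = a + b (-1)^n] (weight [1]: inner products; weight [(-1)^n]: photon-number
      parity). Sesquilinearity then gives the pairings of [|g>],
      [perp = (a^dag - g^* )|g>] and [plus = (a^dag + g^* )|g>].
   2. The output state. Iterating the transformed creation operators shows that [U]
      maps [|n,0>] and [|0,n>] to binomial superpositions. For the photon-added
      coherent state (which has no vacuum component) and [beta = alpha/sqrt 2]:
        [U|Phi_xy>(p,q) = c ((-1)^x + (-1)^y (-1)^q) (perp(p) beta(q) + beta(p) plus(q))].
   3. Measurement. Bob's parity outcome is [x xor y] with certainty; Alice's outcome 0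
      keeps the [perp(p)] term and outcome 1 the [beta(p)] term. The double series of
      each probability thus factorizes into products of pairings from part 1, giving
      the four probabilities and [J]. *)
From Pilot Require Import Defs.
From Stdlib Require Import Reals Lra Lia Arith FunctionalExtensionality.
Open Scope R_scope.

Lemma Cx_eq (z w : Cx) : Re z = Re w -> Im z = Im w -> z = w.
Proof. destruct z, w; simpl; intros; subst; reflexivity. Qed.

Ltac Csplit := apply Cx_eq; cbn [Re Im Cmul Cconj RtoC Cadd Csub Copp C0 Defs.C1 coh adag Cpow].
Ltac Csolve := Csplit; ring.

Lemma Cnorm2_nonneg (z : Cx) : 0 <= Cnorm2 z.
Proof. unfold Cnorm2. nra. Qed.

Lemma Cpow_norm (g : Cx) (n : nat) :
  Cmul (Cconj (Cpow g n)) (Cpow g n) = RtoC (Cnorm2 g ^ n).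
Proof.
  induction n as [|n IHn]; [Csplit; simpl; ring|].
  cbn [Cpow]. revert IHn. destruct (Cpow g n) as [px py], g as [gx gy]. intro IH.
  assert (H : px * px + py * py = (gx * gx + gy * gy) ^ n).
  { apply (f_equal Re) in IH. unfold Cnorm2 in IH. cbn in IH. lra. }
  Csplit; unfold Cnorm2; cbn [Re Im]; [rewrite <- tech_pow_Rmult, <- H|]; ring.
Qed.

Lemma Cpow_add (g : Cx) (m n : nat) : Cpow g (m + n) = Cmul (Cpow g m) (Cpow g n).
Proof. induction m as [|m IHm]; simpl; [|rewrite IHm]; Csolve. Qed.

Lemma Cpow_scal (c : R) (z : Cx) (n : nat) :
  Cpow (Cmul (RtoC c) z) n = Cmul (RtoC (c ^ n)) (Cpow z n).
Proof. induction n as [|n IHn]; simpl; [|rewrite IHn]; Csolve. Qed.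

Lemma Csum_ext (f g : nat -> Cx) (N : nat) : (forall n, f n = g n) -> Csum f N = Csum g N.
Proof. intro H; induction N; simpl; auto. rewrite IHN, H; auto. Qed.

Lemma Csum_add (f g : nat -> Cx) (N : nat) :
  Csum (fun n => Cadd (f n) (g n)) N = Cadd (Csum f N) (Csum g N).
Proof. induction N; simpl; [|rewrite IHN]; Csolve. Qed.

Lemma Csum_scal (c : Cx) (f : nat -> Cx) (N : nat) :
  Csum (fun n => Cmul c (f n)) N = Cmul c (Csum f N).
Proof. induction N; simpl; [|rewrite IHN]; Csolve. Qed.

Lemma Csum_prod (a b : nat -> Cx) (M N : nat) :
  Csum (fun p => Csum (fun q => Cmul (a p) (b q)) N) M = Cmul (Csum a M) (Csum b N).
Proof. induction M; simpl; [|rewrite IHM, Csum_scal]; Csolve. Qed.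

Lemma Csum_Re (f : nat -> Cx) (N : nat) : Re (Csum f N) = Rsum (fun n => Re (f n)) N.
Proof. induction N; simpl; auto. rewrite IHN; auto. Qed.

Lemma Csum_Im (f : nat -> Cx) (N : nat) : Im (Csum f N) = Rsum (fun n => Im (f n)) N.
Proof. induction N; simpl; auto. rewrite IHN; auto. Qed.

Lemma Rsum_ext (f g : nat -> R) (N : nat) : (forall n, f n = g n) -> Rsum f N = Rsum g N.
Proof. intro H; induction N; simpl; auto. rewrite IHN, H; auto. Qed.

Lemma Rsum_scal (c : R) (f : nat -> R) (N : nat) : Rsum (fun n => c * f n) N = c * Rsum f N.
Proof. induction N as [|N IHN]; simpl; [|rewrite IHN]; ring. Qed.

Lemma Rsum_S (f : nat -> R) (N : nat) : Rsum f (S N) = sum_f_R0 f N.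
Proof.
  induction N as [|N IHN]; [simpl; ring|].
  change (Rsum f (S (S N))) with (Rsum f (S N) + f (S N)). rewrite IHN. reflexivity.
Qed.

Lemma Un_cv_const (c : R) : Un_cv (fun _ => c) c.
Proof.
  intros eps he. exists 0%nat. intros. unfold Rdist. rewrite Rminus_diag, Rabs_R0. lra.
Qed.

Lemma Ccv_ext (s t : nat -> Cx) (z w : Cx) :
  (forall N, s N = t N) -> z = w -> Ccv s z -> Ccv t w.
Proof.
  intros H <- [H1 H2]; split.
  - apply (Un_cv_ext (fun N => Re (s N))); auto. intro; rewrite H; auto.
  - apply (Un_cv_ext (fun N => Im (s N))); auto. intro; rewrite H; auto.
Qed.

Lemma Ccv_const (c : Cx) : Ccv (fun _ => c) c.
Proof. split; apply Un_cv_const. Qed.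

Lemma Ccv_add (s t : nat -> Cx) (a b : Cx) :
  Ccv s a -> Ccv t b -> Ccv (fun N => Cadd (s N) (t N)) (Cadd a b).
Proof. intros [H1 H2] [H3 H4]; split; simpl; apply CV_plus; auto. Qed.

Lemma Ccv_mul (s t : nat -> Cx) (a b : Cx) :
  Ccv s a -> Ccv t b -> Ccv (fun N => Cmul (s N) (t N)) (Cmul a b).
Proof.
  intros [H1 H2] [H3 H4]; split; simpl.
  - apply CV_minus; apply CV_mult; auto.
  - apply CV_plus; apply CV_mult; auto.
Qed.

Lemma Ccv_real_series (f : nat -> R) (l k : R) (c : Cx) : Un_cv (Rsum f) l ->
  Ccv (fun N => Csum (fun n => Cmul c (RtoC (k * f n))) N) (Cmul c (RtoC (k * l))).
Proof.
  intro H.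
  eapply (Ccv_ext (fun N => Cmul c (RtoC (k * Rsum f N)))); [|reflexivity|].
  - intro N. rewrite Csum_scal. f_equal. apply Cx_eq.
    + rewrite Csum_Re. simpl. rewrite <- Rsum_scal. reflexivity.
    + rewrite Csum_Im. simpl. induction N as [|N IHN]; simpl; [|rewrite <- IHN]; ring.
  - apply Ccv_mul; [apply Ccv_const|]. split; simpl.
    + apply CV_mult; [apply Un_cv_const | exact H].
    + apply Un_cv_const.
Qed.

Definition exp_coef0 (y : R) (n : nat) : R := y ^ n / INR (fact n).
Definition exp_coef1 (y : R) (n : nat) : R := INR n * y ^ (n - 1) / INR (fact n).
Definition exp_coef2 (y : R) (n : nat) : R := INR n * INR n * y ^ (n - 1) / INR (fact n).

Lemma exp_coef0_cv (y : R) : Un_cv (Rsum (exp_coef0 y)) (exp y).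
Proof.
  apply (CV_shift _ 1). unfold exp. destruct (exist_exp y) as [l Hl]. cbn [proj1_sig].
  apply (Un_cv_ext (fun N => sum_f_R0 (fun i => / INR (fact i) * y ^ i) N)); [|exact Hl].
  intro n. rewrite Nat.add_1_r, Rsum_S. apply sum_eq. intros. unfold exp_coef0, Rdiv. ring.
Qed.

Lemma exp_coef1_sum (y : R) (N : nat) : Rsum (exp_coef1 y) (S N) = Rsum (exp_coef0 y) N.
Proof.
  induction N as [|N IHN]; [simpl; unfold exp_coef1; simpl; unfold Rdiv; ring|].
  change (Rsum (exp_coef1 y) (S (S N))) with (Rsum (exp_coef1 y) (S N) + exp_coef1 y (S N)).
  rewrite IHN. simpl Rsum at 2. f_equal. unfold exp_coef1, exp_coef0.
  replace (S N - 1)%nat with N by lia. rewrite fact_simpl, mult_INR.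
  field. split; [apply INR_fact_neq_0 | apply not_0_INR; lia].
Qed.

Lemma exp_coef1_cv (y : R) : Un_cv (Rsum (exp_coef1 y)) (exp y).
Proof.
  apply (CV_shift _ 1). apply (Un_cv_ext (Rsum (exp_coef0 y))); [|apply exp_coef0_cv].
  intro; rewrite Nat.add_1_r, exp_coef1_sum; auto.
Qed.

(* Using [n^2 = n (n-1) + n], the second moment is [y] times the first plus the zeroth. *)
Lemma exp_coef2_sum (y : R) (N : nat) :
  Rsum (exp_coef2 y) (S N) = y * Rsum (exp_coef1 y) N + Rsum (exp_coef0 y) N.
Proof.
  induction N as [|N IHN]; [simpl; unfold exp_coef2; simpl; unfold Rdiv; ring|].
  change (Rsum (exp_coef2 y) (S (S N))) with (Rsum (exp_coef2 y) (S N) + exp_coef2 y (S N)).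
  rewrite IHN. simpl Rsum at 3 4. unfold exp_coef2, exp_coef1, exp_coef0.
  replace (S N - 1)%nat with N by lia. rewrite fact_simpl, mult_INR.
  destruct N as [|N]; [simpl; field|].
  replace (S N - 1)%nat with N by lia. simpl pow. rewrite S_INR.
  field. split; [apply INR_fact_neq_0 | rewrite <- S_INR; apply not_0_INR; lia].
Qed.

Lemma exp_coef2_cv (y : R) : Un_cv (Rsum (exp_coef2 y)) ((1 + y) * exp y).
Proof.
  apply (CV_shift _ 1).
  apply (Un_cv_ext (fun N => y * Rsum (exp_coef1 y) N + Rsum (exp_coef0 y) N)).
  { intro; rewrite Nat.add_1_r, exp_coef2_sum; auto. }
  replace ((1 + y) * exp y) with (y * exp y + exp y) by ring.
  apply CV_plus; [apply CV_mult; [apply Un_cv_const | apply exp_coef1_cv] | apply exp_coef0_cv].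
Qed.

Lemma exp_coef0_scale (s y : R) (n : nat) : s ^ n * exp_coef0 y n = exp_coef0 (s * y) n.
Proof. unfold exp_coef0. rewrite Rpow_mult_distr. unfold Rdiv. ring. Qed.

Lemma exp_coef1_scale (s y : R) (n : nat) : s ^ n * exp_coef1 y n = s * exp_coef1 (s * y) n.
Proof.
  unfold exp_coef1. destruct n as [|k]; [cbn [INR]; unfold Rdiv; ring|].
  replace (S k - 1)%nat with k by lia. rewrite Rpow_mult_distr. simpl pow. unfold Rdiv. ring.
Qed.

Lemma exp_coef2_scale (s y : R) (n : nat) : s ^ n * exp_coef2 y n = s * exp_coef2 (s * y) n.
Proof.
  unfold exp_coef2. destruct n as [|k]; [cbn [INR]; unfold Rdiv; ring|].
  replace (S k - 1)%nat with k by lia. rewrite Rpow_mult_distr. simpl pow. unfold Rdiv. ring.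
Qed.

(** With the
    weight [1] this is the inner product; with [(-1)^n] it is the expectation of
    the photon-number parity, which is what Bob's measurement sees. *)
Definition weighted_inner (f : nat -> R) (u v : vec) (z : Cx) : Prop :=
  Ccv (fun N => Csum (fun n => Cmul (RtoC (f n)) (Cmul (Cconj (u n)) (v n))) N) z.

Definition vcomb (c1 : Cx) (u1 : vec) (c2 : Cx) (u2 : vec) : vec :=
  fun n => Cadd (Cmul c1 (u1 n)) (Cmul c2 (u2 n)).

Lemma Ccv_series_comb (c1 c2 : Cx) (f g h : nat -> Cx) (a b : Cx) :
  Ccv (fun N => Csum f N) a -> Ccv (fun N => Csum g N) b ->
  (forall n, h n = Cadd (Cmul c1 (f n)) (Cmul c2 (g n))) ->
  Ccv (fun N => Csum h N) (Cadd (Cmul c1 a) (Cmul c2 b)).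
Proof.
  intros Ha Hb Hh.
  eapply (Ccv_ext (fun N => Cadd (Cmul c1 (Csum f N)) (Cmul c2 (Csum g N)))); [|reflexivity|].
  - intro N. rewrite <- !Csum_scal, <- Csum_add. apply Csum_ext. intro; auto.
  - apply Ccv_add; apply Ccv_mul; auto; apply Ccv_const.
Qed.

Lemma weighted_inner_ext (f f' : nat -> R) (u u' v v' : vec) (z z' : Cx) :
  (forall n, f n = f' n) -> (forall n, u n = u' n) -> (forall n, v n = v' n) -> z = z' ->
  weighted_inner f u v z -> weighted_inner f' u' v' z'.
Proof.
  intros Hf Hu Hv Hz H. eapply Ccv_ext; [|exact Hz|exact H].
  intro N. apply Csum_ext. intro n. rewrite Hf, Hu, Hv. reflexivity.
Qed.

Lemma weighted_inner_limit (f : nat -> R) (u v : vec) (z z' : Cx) :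
  z = z' -> weighted_inner f u v z -> weighted_inner f u v z'.
Proof. apply weighted_inner_ext; reflexivity. Qed.

Lemma weighted_inner_weights (a b : R) (f g : nat -> R) (u v : vec) (z1 z2 : Cx) :
  weighted_inner f u v z1 -> weighted_inner g u v z2 ->
  weighted_inner (fun n => a * f n + b * g n) u v
    (Cadd (Cmul (RtoC a) z1) (Cmul (RtoC b) z2)).
Proof. intros H1 H2. eapply Ccv_series_comb; [exact H1|exact H2|]. intro; unfold vcomb; Csolve. Qed.

Lemma weighted_inner_comb_r (f : nat -> R) (u v1 v2 : vec) (c1 c2 z1 z2 : Cx) :
  weighted_inner f u v1 z1 -> weighted_inner f u v2 z2 ->
  weighted_inner f u (vcomb c1 v1 c2 v2) (Cadd (Cmul c1 z1) (Cmul c2 z2)).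
Proof. intros H1 H2. eapply Ccv_series_comb; [exact H1|exact H2|]. intro; unfold vcomb; Csolve. Qed.

Lemma weighted_inner_comb_l (f : nat -> R) (u1 u2 v : vec) (c1 c2 z1 z2 : Cx) :
  weighted_inner f u1 v z1 -> weighted_inner f u2 v z2 ->
  weighted_inner f (vcomb c1 u1 c2 u2) v
    (Cadd (Cmul (Cconj c1) z1) (Cmul (Cconj c2) z2)).
Proof. intros H1 H2. eapply Ccv_series_comb; [exact H1|exact H2|]. intro; unfold vcomb; Csolve. Qed.

Lemma weighted_inner_sym (f : nat -> R) (u v : vec) (z : Cx) :
  weighted_inner f u v z -> weighted_inner f v u (Cconj z).
Proof.
  intros [HRe HIm]. split; cbn [Re Im Cconj].
  - refine (Un_cv_ext _ _ _ _ HRe). intro N. rewrite !Csum_Re.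
    apply Rsum_ext. intro. cbn. ring.
  - refine (Un_cv_ext _ _ _ _ (CV_opp _ _ HIm)). intro N. unfold opp_seq. rewrite !Csum_Im.
    induction N as [|N IHN]; cbn [Rsum]; [ring|]. rewrite <- IHN. cbn. ring.
Qed.

(** The weights [a + b (-1)^n]: the squared amplitudes Bob's parity outcome
    leaves on the photon-number basis are of this form. *)
Definition parity_weight (a b : R) (n : nat) : R := a + b * (-1) ^ n.

Lemma weighted_inner_parity (a b : R) (u v : vec) (z1 z2 : Cx) :
  weighted_inner (pow 1) u v z1 -> weighted_inner (pow (-1)) u v z2 ->
  weighted_inner (parity_weight a b) u v (Cadd (Cmul (RtoC a) z1) (Cmul (RtoC b) z2)).
Proof.
  intros H1 H2.
  eapply weighted_inner_ext;
    [| reflexivity .. | exact (weighted_inner_weights a b _ _ u v _ _ H1 H2)].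
  intro n. unfold parity_weight. rewrite pow1. ring.
Qed.

Lemma sqrt_INR_S_pos (k : nat) : 0 < sqrt (INR (S k)).
Proof. apply sqrt_lt_R0. apply lt_0_INR; lia. Qed.
Lemma sqrt_fact_pos (k : nat) : 0 < sqrt (INR (fact k)).
Proof. apply sqrt_lt_R0. apply INR_fact_lt_0. Qed.
Lemma sqrt_INR_sq (k : nat) : sqrt (INR k) * sqrt (INR k) = INR k.
Proof. apply sqrt_sqrt. apply pos_INR. Qed.
Lemma sqrt_fact_sq (k : nat) : sqrt (INR (fact k)) * sqrt (INR (fact k)) = INR (fact k).
Proof. apply sqrt_sqrt. apply pos_INR. Qed.
Lemma sqrt_fact_S (k : nat) :
  sqrt (INR (fact (S k))) = sqrt (INR (S k)) * sqrt (INR (fact k)).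
Proof. rewrite fact_simpl, mult_INR. apply sqrt_mult; apply pos_INR. Qed.
Lemma INR_fact_S_sqrt (k : nat) : INR (fact (S k)) =
  sqrt (INR (S k)) * sqrt (INR (S k)) * (sqrt (INR (fact k)) * sqrt (INR (fact k))).
Proof. rewrite sqrt_INR_sq, sqrt_fact_sq, fact_simpl, mult_INR. auto. Qed.
Lemma sqrt_fact0 : sqrt (INR (fact 0)) = 1.
Proof. replace (INR (fact 0)) with 1 by reflexivity. exact sqrt_1. Qed.

(* Replaces [sqrt (S k)] and [sqrt (k!)] by fresh positive variables [t], [s] and
   expresses [S k] and [(S k)!] through them, so that [field] can finish. *)
Ltac abstract_sqrt_fact k :=
  rewrite ?(sqrt_fact_S k), ?(INR_fact_S_sqrt k);
  let t := fresh "t" in let s := fresh "s" in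
  let Ht := fresh "Ht" in let Hs := fresh "Hs" in
  let Ht2 := fresh "Ht2" in let Hs2 := fresh "Hs2" in
  pose proof (sqrt_INR_S_pos k) as Ht; pose proof (sqrt_fact_pos k) as Hs;
  pose proof (sqrt_INR_sq (S k)) as Ht2; pose proof (sqrt_fact_sq k) as Hs2;
  set (t := sqrt (INR (S k))) in *; set (s := sqrt (INR (fact k))) in *;
  clearbody t s; rewrite <- ?Ht2, <- ?Hs2.

Section CoherentPairings.
Variable g : Cx.
Let r := Cnorm2 g.
Let e := exp (- Cnorm2 g / 2).

Lemma coh_coh_term (n : nat) :
  Cmul (Cconj (coh g n)) (coh g n) = RtoC (e * e * exp_coef0 r n).
Proof.
  pose proof (Cpow_norm g n) as H. unfold exp_coef0.
  revert H. unfold coh. fold e. destruct (Cpow g n) as [px py]. intro H.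
  apply (f_equal Re) in H. cbn in H. fold r in H. rewrite <- H.
  pose proof (sqrt_fact_pos n) as Hs. pose proof (sqrt_fact_sq n) as Hs2.
  set (s := sqrt (INR (fact n))) in *. clearbody s. rewrite <- Hs2.
  Csplit; field; lra.
Qed.

Lemma coh_adag_term (n : nat) :
  Cmul (Cconj (coh g n)) (adag (coh g) n) = Cmul (Cconj g) (RtoC (e * e * exp_coef1 r n)).
Proof.
  unfold exp_coef1. destruct n as [|k]; [Csplit; cbn [INR]; unfold Rdiv; ring|].
  pose proof (Cpow_norm g k) as H. unfold adag, coh. fold e. cbn [Cpow].
  revert H. destruct (Cpow g k) as [px py]. fold r. intro H.
  apply (f_equal Re) in H. cbn in H. replace (S k - 1)%nat with k by lia.
  abstract_sqrt_fact k. rewrite <- H. unfold r. destruct g as [gx gy]. unfold Cnorm2.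
  Csplit; field; lra.
Qed.

Lemma adag_adag_term (n : nat) :
  Cmul (Cconj (adag (coh g) n)) (adag (coh g) n) = RtoC (e * e * exp_coef2 r n).
Proof.
  unfold exp_coef2. destruct n as [|k]; [Csplit; cbn [INR]; unfold Rdiv; ring|].
  pose proof (Cpow_norm g k) as H. unfold adag, coh. fold e.
  revert H. destruct (Cpow g k) as [px py]. fold r. intro H.
  apply (f_equal Re) in H. cbn in H. replace (S k - 1)%nat with k by lia.
  abstract_sqrt_fact k. rewrite <- H. Csplit; field; lra.
Qed.

Lemma coh_damping (s : R) : e * e * exp (s * r) = exp ((s - 1) * r).
Proof. unfold e, r. rewrite <- !exp_plus. f_equal. field. Qed.

Lemma coh_coh_pairing (s : R) :
  weighted_inner (pow s) (coh g) (coh g) (RtoC (exp ((s - 1) * r))).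
Proof.
  eapply Ccv_ext; [| | exact (Ccv_real_series _ _ (e * e) Defs.C1 (exp_coef0_cv (s * r)))].
  - intro N. apply Csum_ext. intro n. rewrite coh_coh_term, <- exp_coef0_scale. Csolve.
  - rewrite coh_damping. Csolve.
Qed.

Lemma coh_adag_pairing (s : R) :
  weighted_inner (pow s) (coh g) (adag (coh g))
    (Cmul (Cconj g) (RtoC (s * exp ((s - 1) * r)))).
Proof.
  eapply Ccv_ext;
    [| | exact (Ccv_real_series _ _ (e * e * s) (Cconj g) (exp_coef1_cv (s * r)))].
  - intro N. apply Csum_ext. intro n.
    rewrite coh_adag_term.
    replace (e * e * s * exp_coef1 (s * r) n) with (e * e * (s ^ n * exp_coef1 r n))
      by (rewrite exp_coef1_scale; ring). Csolve.
  - rewrite <- coh_damping. Csolve.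
Qed.

Lemma adag_adag_pairing (s : R) :
  weighted_inner (pow s) (adag (coh g)) (adag (coh g))
    (RtoC (s * (1 + s * r) * exp ((s - 1) * r))).
Proof.
  eapply Ccv_ext; [| | exact (Ccv_real_series _ _ (e * e * s) Defs.C1 (exp_coef2_cv (s * r)))].
  - intro N. apply Csum_ext. intro n.
    rewrite adag_adag_term.
    replace (e * e * s * exp_coef2 (s * r) n) with (e * e * (s ^ n * exp_coef2 r n))
      by (rewrite exp_coef2_scale; ring). Csolve.
  - rewrite <- coh_damping. Csolve.
Qed.
End CoherentPairings.

Lemma exp_unit_weight (r : R) : exp ((1 - 1) * r) = 1.
Proof. replace ((1 - 1) * r) with 0 by ring. apply exp_0. Qed.

Lemma exp_parity_weight (r : R) : exp ((-1 - 1) * r) = exp (- 2 * r).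
Proof. f_equal. ring. Qed.

Section ParityPairings.
Variable g : Cx.
Let r := Cnorm2 g.
(* [E = <g|(-1)^N|g>], the parity expectation of the coherent state. *)
Let E := exp (- 2 * r).

Ltac parity_pairing lem :=
  eapply weighted_inner_limit; [|apply weighted_inner_parity; apply lem];
  rewrite exp_unit_weight, exp_parity_weight; unfold E, r; Csolve.

Lemma parity_coh_coh (a b : R) :
  weighted_inner (parity_weight a b) (coh g) (coh g) (RtoC (a + b * E)).
Proof. parity_pairing coh_coh_pairing. Qed.

Lemma parity_coh_adag (a b : R) :
  weighted_inner (parity_weight a b) (coh g) (adag (coh g))
    (Cmul (Cconj g) (RtoC (a - b * E))).
Proof. parity_pairing coh_adag_pairing. Qed.

Lemma parity_adag_coh (a b : R) :
  weighted_inner (parity_weight a b) (adag (coh g)) (coh g) (Cmul g (RtoC (a - b * E))).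
Proof.
  eapply weighted_inner_limit; [|apply weighted_inner_sym, parity_coh_adag]. Csolve.
Qed.

Lemma parity_adag_adag (a b : R) :
  weighted_inner (parity_weight a b) (adag (coh g)) (adag (coh g))
    (RtoC (a * (1 + r) - b * (1 - r) * E)).
Proof. parity_pairing adag_adag_pairing. Qed.
End ParityPairings.

Definition perp_state (g : Cx) : vec := vcomb Defs.C1 (adag (coh g)) (Copp (Cconj g)) (coh g).
(** [(a^dag + g^* )|g>]: with [perp_state] it splits the beam-splitter output,
    since [a^dag g (x) g + g (x) a^dag g = perp_state g (x) g + g (x) plus_state g]. *)
Definition plus_state (g : Cx) : vec := vcomb Defs.C1 (adag (coh g)) (Cconj g) (coh g).

Section ShiftedStates.
Variables (g : Cx) (a b : R).
Let r := Cnorm2 g.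
Let E := exp (- 2 * r).

Ltac pairing_step :=
  match goal with
  | |- weighted_inner _ (vcomb _ _ _ _) _ _ => apply weighted_inner_comb_l
  | |- weighted_inner _ _ (vcomb _ _ _ _) _ => apply weighted_inner_comb_r
  | |- weighted_inner _ (coh _) (coh _) _ => apply parity_coh_coh
  | |- weighted_inner _ (coh _) (adag _) _ => apply parity_coh_adag
  | |- weighted_inner _ (adag _) (coh _) _ => apply parity_adag_coh
  | |- weighted_inner _ (adag _) (adag _) _ => apply parity_adag_adag
  end.
Ltac expand_pairing :=
  unfold perp_state, plus_state; eapply weighted_inner_limit; [| repeat pairing_step];
  unfold E, r; generalize (exp (- 2 * Cnorm2 g)); intro;
  destruct g as [u v]; unfold Cnorm2; Csolve.

Lemma perp_perp_parity :
  weighted_inner (parity_weight a b) (perp_state g) (perp_state g)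
    (RtoC (a - b * (1 - 4 * r) * E)).
Proof. expand_pairing. Qed.

Lemma coh_perp_parity :
  weighted_inner (parity_weight a b) (coh g) (perp_state g)
    (Cmul (Cconj g) (RtoC (- 2 * b * E))).
Proof. expand_pairing. Qed.

Lemma perp_coh_parity :
  weighted_inner (parity_weight a b) (perp_state g) (coh g) (Cmul g (RtoC (- 2 * b * E))).
Proof. eapply weighted_inner_limit; [|apply weighted_inner_sym, coh_perp_parity]. Csolve. Qed.

Lemma plus_plus_parity :
  weighted_inner (parity_weight a b) (plus_state g) (plus_state g)
    (RtoC (a * (1 + 4 * r) - b * E)).
Proof. expand_pairing. Qed.

Lemma coh_plus_parity :
  weighted_inner (parity_weight a b) (coh g) (plus_state g) (Cmul (Cconj g) (RtoC (2 * a))).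
Proof. expand_pairing. Qed.

Lemma plus_coh_parity :
  weighted_inner (parity_weight a b) (plus_state g) (coh g) (Cmul g (RtoC (2 * a))).
Proof. eapply weighted_inner_limit; [|apply weighted_inner_sym, coh_plus_parity]. Csolve. Qed.
End ShiftedStates.

(** The beam splitter. [U] maps [|n,0>] to the binomial superposition
    [sum_(p+q=n) 2^(-n/2) sqrt(n!/(p! q!)) |p,q>], and [|0,n>] to the same with
    the signs [(-1)^q]; both follow from iterating the transformed creation
    operators [(a^dag + sigma b^dag)/sqrt 2], [sigma = +-1], on the vacuum. *)
Definition mode_cr (sigma : R) (psi : vec2) : vec2 := fun p q =>
  Cmul (RtoC (/ sqrt 2)) (Cadd (Acr psi p q) (Cmul (RtoC sigma) (Bcr psi p q))).

Lemma Cplus_mode_cr (psi : vec2) (p q : nat) : Cplus psi p q = mode_cr 1 psi p q.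
Proof. unfold Cplus, mode_cr. Csolve. Qed.

Lemma Cminus_mode_cr (psi : vec2) (p q : nat) : Cminus psi p q = mode_cr (-1) psi p q.
Proof. unfold Cminus, mode_cr. Csolve. Qed.

Lemma sqrt2_pos : 0 < sqrt 2.
Proof. apply sqrt_lt_R0; lra. Qed.

Lemma iter_mode_cr (sigma : R) (F : vec2 -> vec2) (n : nat) :
  (forall psi p q, F psi p q = mode_cr sigma psi p q) ->
  forall p q, Nat.iter n F vac2 p q =
    if Nat.eqb (p + q) n
    then RtoC ((/ sqrt 2) ^ n * INR (fact n) * sigma ^ q /
               (sqrt (INR (fact p)) * sqrt (INR (fact q))))
    else C0.
Proof.
  intro HF. pose proof sqrt2_pos as H2.
  induction n as [|n IH]; intros p q.
  - change (Nat.iter 0 F vac2) with vac2. unfold vac2.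
    destruct p as [|a], q as [|b]; cbn [delta0 Nat.eqb Nat.add];
      [rewrite sqrt_fact0; apply Cx_eq; simpl; field | Csolve ..].
  - rewrite Nat.iter_succ, HF. unfold mode_cr, Acr, Bcr.
    destruct p as [|a], q as [|b]; [cbn [Nat.eqb Nat.add]; Csolve | rewrite IH .. | rewrite !IH].
    + cbn [Nat.add Nat.eqb]. destruct (Nat.eqb_spec b n) as [->|]; [|Csolve].
      rewrite sqrt_fact0. abstract_sqrt_fact n. cbn [pow]. Csplit; field; lra.
    + rewrite !Nat.add_0_r. cbn [Nat.eqb]. destruct (Nat.eqb_spec a n) as [->|]; [|Csolve].
      rewrite sqrt_fact0. abstract_sqrt_fact n. cbn [pow]. Csplit; field; lra.
    + destruct (Nat.eqb_spec (S a + S b) (S n)) as [E|E].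
      * rewrite (proj2 (Nat.eqb_eq (a + S b) n)), (proj2 (Nat.eqb_eq (S a + b) n)) by lia.
        rewrite (fact_simpl n), (mult_INR (S n) (fact n)).
        replace (INR (S n)) with (INR (S a) + INR (S b)) by (rewrite <- plus_INR; f_equal; lia).
        abstract_sqrt_fact a. abstract_sqrt_fact b. cbn [pow]. Csplit; field; lra.
      * rewrite (proj2 (Nat.eqb_neq (a + S b) n)), (proj2 (Nat.eqb_neq (S a + b) n)) by lia.
        Csolve.
Qed.

(** [<p,q| U |p+q, 0>]. *)
Definition bs_amp (p q : nat) : R :=
  (/ sqrt 2) ^ (p + q) * sqrt (INR (fact (p + q))) / (sqrt (INR (fact p)) * sqrt (INR (fact q))).

Lemma Ubasis_left (p q : nat) : Ubasis (p + q) 0 p q = RtoC (bs_amp p q).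
Proof.
  unfold Ubasis, bs_amp. change (Nat.iter 0 Cminus vac2) with vac2.
  rewrite (iter_mode_cr 1 Cplus _ Cplus_mode_cr), Nat.eqb_refl, pow1, Nat.mul_1_r.
  pose proof (sqrt_fact_pos (p + q)) as Hn. pose proof (sqrt_fact_sq (p + q)) as Hn2.
  pose proof (sqrt_fact_pos p) as Hp. pose proof (sqrt_fact_pos q) as Hq.
  set (s := sqrt (INR (fact (p + q)))) in *. clearbody s. rewrite <- Hn2.
  Csplit; field; lra.
Qed.

Lemma Ubasis_right (p q : nat) : Ubasis 0 (p + q) p q = RtoC ((-1) ^ q * bs_amp p q).
Proof.
  unfold Ubasis, bs_amp. change (Nat.iter 0 Cplus ?X) with X.
  rewrite (iter_mode_cr (-1) Cminus _ Cminus_mode_cr), Nat.eqb_refl.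
  replace (fact 0 * fact (p + q))%nat with (fact (p + q)) by (simpl; lia).
  pose proof (sqrt_fact_pos (p + q)) as Hn. pose proof (sqrt_fact_sq (p + q)) as Hn2.
  pose proof (sqrt_fact_pos p) as Hp. pose proof (sqrt_fact_pos q) as Hq.
  set (s := sqrt (INR (fact (p + q)))) in *. clearbody s. rewrite <- Hn2.
  Csplit; field; lra.
Qed.

(** Signs of the two NOON branches as seen on [|p,q>] after the beam splitter:
    [(-1)^x] for [|n,0>] and [(-1)^y (-1)^q] for [|0,n>]. *)
Definition branch_sign (x y : bool) (q : nat) : R := sgnR x + sgnR y * (-1) ^ q.

Lemma NOON_vacuum_free (xi : vec) (x y : bool) (m k : nat) : xi 0%nat = C0 ->
  NOON xi x y m k =
  Cmul (RtoC (/ sqrt 2)) (Cadd (Cmul (RtoC (sgnR x)) (Cmul (xi m) (delta0 k)))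
                               (Cmul (RtoC (sgnR y)) (Cmul (delta0 m) (xi k)))).
Proof.
  intro H. unfold NOON. cbv zeta. rewrite H.
  replace (2 * (1 + sgnR (xorb x y) * Cnorm2 C0)) with 2 by (unfold Cnorm2; simpl; ring).
  reflexivity.
Qed.

Lemma Csum_first (f : nat -> Cx) (k : nat) :
  (forall m, (0 < m <= k)%nat -> f m = C0) -> Csum f (S k) = Cadd C0 (f 0%nat).
Proof.
  induction k as [|k IHk]; intro H; [reflexivity|].
  change (Csum f (S (S k))) with (Cadd (Csum f (S k)) (f (S k))).
  rewrite (H (S k)), IHk by (intros; try apply H; lia). Csolve.
Qed.

(** A vacuum-free NOON state leaves the beam splitter as [xi_(p+q)] times the
    binomial amplitude, with the branch signs: only [|p+q,0>] and [|0,p+q>]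
    feed [|p,q>]. *)
Lemma BS_NOON (xi : vec) (x y : bool) (p q : nat) : xi 0%nat = C0 ->
  BS (NOON xi x y) p q =
  Cmul (RtoC (/ sqrt 2 * branch_sign x y q * bs_amp p q)) (xi (p + q)%nat).
Proof.
  intro H0. unfold BS.
  transitivity (Cmul (RtoC (/ sqrt 2)) (Cmul (xi (p + q)%nat)
    (Cadd (Cmul (RtoC (sgnR x)) (Ubasis (p + q) 0 p q))
          (Cmul (RtoC (sgnR y)) (Ubasis 0 (p + q) p q))))).
  2: { rewrite Ubasis_left, Ubasis_right. unfold branch_sign. Csolve. }
  remember (p + q)%nat as n. destruct n as [|k].
  - cbn [Csum Nat.sub]. rewrite NOON_vacuum_free, H0 by auto. cbn [delta0]. Csolve.
  - change (Csum ?f (S (S k))) with (Cadd (Csum f (S k)) (f (S k))).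
    rewrite Csum_first.
    + rewrite !NOON_vacuum_free, Nat.sub_diag, Nat.sub_0_r, H0 by auto.
      cbn [delta0]. Csolve.
    + intros m Hm. rewrite NOON_vacuum_free by auto. destruct m as [|m]; [lia|].
      replace (S k - S m)%nat with (S (k - S m)) by lia. cbn [delta0]. Csolve.
Qed.

(** [a^dag|g> (x) |g> + |g> (x) a^dag|g>]: the photon-added coherent state
    [a^dag|alpha>] leaves the beam splitter as this state with [g = alpha/sqrt 2]. *)
Definition pa_split (g : Cx) : vec2 := fun p q =>
  Cadd (Cmul (adag (coh g) p) (coh g q)) (Cmul (coh g p) (adag (coh g) q)).

Lemma pa_split_value (g : Cx) (p q : nat) :
  pa_split g p q =
  Cmul (RtoC (exp (- Cnorm2 g / 2) * exp (- Cnorm2 g / 2) * INR (p + q) /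
              (sqrt (INR (fact p)) * sqrt (INR (fact q))))) (Cpow g (p + q - 1)).
Proof.
  unfold pa_split. set (e := exp (- Cnorm2 g / 2)).
  destruct p as [|a], q as [|b].
  - cbn [adag Nat.add INR]. Csplit; unfold Rdiv; ring.
  - unfold adag, coh. fold e. replace (0 + S b - 1)%nat with b by lia.
    replace (0 + S b)%nat with (S b) by lia. rewrite sqrt_fact0.
    cbn [Cpow]. generalize (Cpow g b) as Z. intro Z.
    abstract_sqrt_fact b. Csplit; field; lra.
  - unfold adag, coh. fold e. replace (S a + 0 - 1)%nat with a by lia.
    replace (S a + 0)%nat with (S a) by lia. rewrite sqrt_fact0.
    cbn [Cpow]. generalize (Cpow g a) as Z. intro Z.
    abstract_sqrt_fact a. Csplit; field; lra.
  - unfold adag, coh. fold e. replace (S a + S b - 1)%nat with (S a + b)%nat by lia.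
    rewrite Cpow_add. cbn [Cpow].
    replace (INR (S a + S b)) with (INR (S a) + INR (S b)) by (rewrite plus_INR; auto).
    generalize (Cpow g a) as Za. generalize (Cpow g b) as Zb. intros Zb Za.
    abstract_sqrt_fact a. abstract_sqrt_fact b. Csplit; field; lra.
Qed.

Lemma beta_norm (al : Cx) : Cnorm2 (beta al) = Cnorm2 al / 2.
Proof.
  unfold beta, Cnorm2. destruct al as [u v]. cbn.
  transitivity ((/ sqrt 2 * / sqrt 2) * (u * u + v * v)); [ring|].
  rewrite <- Rinv_mult, sqrt_sqrt by lra. field.
Qed.

(** [U (a^dag|alpha> (x) |0>) = a^dag|beta> (x) |beta> + |beta> (x) a^dag|beta>]
    amplitudewise, with the normalization of [xi_pa]. *)
Lemma pa_coherent_bs (al : Cx) (p q : nat) :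
  Cmul (RtoC (bs_amp p q)) (xi_pa al (p + q)%nat) =
  Cmul (RtoC (/ (sqrt 2 * sqrt (1 + Cnorm2 al)))) (pa_split (beta al) p q).
Proof.
  rewrite pa_split_value, beta_norm. unfold bs_amp.
  pose proof (sqrt_fact_pos p) as Hp. pose proof (sqrt_fact_pos q) as Hq.
  pose proof (Cnorm2_nonneg al) as HA.
  assert (HsA : 0 < sqrt (1 + Cnorm2 al)) by (apply sqrt_lt_R0; lra).
  pose proof sqrt2_pos as H2.
  remember (p + q)%nat as n. destruct n as [|k].
  - unfold xi_pa. cbn [adag INR]. Csplit; unfold Rdiv; ring.
  - unfold xi_pa, adag, coh. replace (S k - 1)%nat with k by lia.
    unfold beta. rewrite Cpow_scal. generalize (Cpow al k) as Z. intro Z.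
    replace (exp (- (Cnorm2 al / 2) / 2) * exp (- (Cnorm2 al / 2) / 2))
      with (exp (- Cnorm2 al / 2)) by (rewrite <- exp_plus; f_equal; field).
    set (E := exp (- Cnorm2 al / 2)).
    abstract_sqrt_fact k. cbn [pow].
    Csplit; field; repeat split; lra.
Qed.

Definition out_amp (al : Cx) : R := / (2 * sqrt (1 + Cnorm2 al)).

(* Splits [1/2] as [1/sqrt 2 * 1/sqrt 2]: one factor from the NOON normalization,
   one from [pa_coherent_bs]. *)
Lemma out_amp_split (al : Cx) :
  out_amp al = / sqrt 2 * / (sqrt 2 * sqrt (1 + Cnorm2 al)).
Proof.
  unfold out_amp. pose proof (Cnorm2_nonneg al) as HA.
  pose proof (sqrt_lt_R0 (1 + Cnorm2 al) ltac:(lra)) as Hs.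
  pose proof sqrt2_pos as H2. rewrite <- (sqrt_sqrt 2) at 1 by lra. field. lra.
Qed.

Lemma xi_pa_vacuum_free (al : Cx) : xi_pa al 0%nat = C0.
Proof. unfold xi_pa. cbn [adag]. Csolve. Qed.

(** The output state: [U|Phi_xy>] at [|p,q>] is
    [out_amp * branch_sign(q) * (perp(p) beta(q) + beta(p) plus(q))], with
    [|beta> = |alpha/sqrt 2>]. Alice's measurement separates the two terms. *)
Lemma BS_output (al : Cx) (x y : bool) (p q : nat) :
  BS (NOON (xi_pa al) x y) p q =
  Cmul (RtoC (out_amp al * branch_sign x y q))
    (Cadd (Cmul (perp_state (beta al) p) (coh (beta al) q))
          (Cmul (coh (beta al) p) (plus_state (beta al) q))).
Proof.
  rewrite BS_NOON by apply xi_pa_vacuum_free.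
  transitivity (Cmul (RtoC (/ sqrt 2 * branch_sign x y q))
                     (Cmul (RtoC (bs_amp p q)) (xi_pa al (p + q)%nat))); [Csolve|].
  rewrite pa_coherent_bs, out_amp_split. unfold pa_split, perp_state, plus_state, vcomb.
  Csolve.
Qed.

Lemma neg1_pow (q : nat) : (-1) ^ q = if Nat.odd q then -1 else 1.
Proof.
  induction q as [|q IHq]; [reflexivity|].
  rewrite <- tech_pow_Rmult, IHq, Nat.odd_succ, <- Nat.negb_odd.
  destruct (Nat.odd q); simpl; ring.
Qed.

(* The branch sign vanishes on the photon-number parity of [q] opposite to [x xor y]:
   Bob's parity outcome is [x xor y] with certainty. *)
Lemma branch_sign_parity (x y : bool) (q : nat) :
  Bool.eqb (Nat.odd q) (xorb x y) = false -> branch_sign x y q = 0.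
Proof.
  unfold branch_sign. rewrite neg1_pow.
  destruct x, y, (Nat.odd q); simpl; intro H; try discriminate; ring.
Qed.

Lemma branch_sign_sq (x y : bool) (q : nat) :
  branch_sign x y q * branch_sign x y q = 2 + 2 * (sgnR x * sgnR y) * (-1) ^ q.
Proof. unfold branch_sign. rewrite neg1_pow. destruct x, y, (Nat.odd q); simpl; ring. Qed.

Lemma l2_of_pairing (u : vec) (z : Cx) : weighted_inner (parity_weight 1 0) u u z -> l2 u.
Proof.
  intros [H _]. exists (Re z). refine (Un_cv_ext _ _ _ _ H).
  intro N. rewrite Csum_Re. apply Rsum_ext. intro. unfold parity_weight, Cnorm2. simpl. ring.
Qed.

Lemma l2_scal (c : Cx) (u : vec) : l2 u -> l2 (fun i => Cmul c (u i)).
Proof.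
  intros [l H]. exists (Cnorm2 c * l).
  apply (Un_cv_ext (fun N => Cnorm2 c * Rsum (fun n => Cnorm2 (u n)) N)).
  - intro N. rewrite <- Rsum_scal. apply Rsum_ext. intro; unfold Cnorm2; simpl; ring.
  - apply CV_mult; [apply Un_cv_const | exact H].
Qed.

Lemma projection_comb (P : vec -> vec) (c1 c2 : Cx) (u v : vec) (n : nat) :
  is_projection P -> l2 u -> l2 v ->
  P (vcomb c1 u c2 v) n = Cadd (Cmul c1 (P u n)) (Cmul c2 (P v n)).
Proof.
  intros [_ [Hadd [Hsc _]]] Hu Hv. unfold vcomb.
  rewrite (Hadd (fun i => Cmul c1 (u i)) (fun i => Cmul c2 (v i))) by (apply l2_scal; auto).
  rewrite !Hsc; auto.
Qed.

Lemma tensor_parity_support (X : vec -> vec) (b : bool) (psi : vec2) :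
  (forall p q, Bool.eqb (Nat.odd q) b = false -> psi p q = C0) ->
  forall p q, tensor X (parityP b) psi p q = X (fun p' => psi p' q) p.
Proof.
  intros Hsupp p q. unfold tensor, parityP. f_equal.
  apply functional_extensionality. intro p'.
  destruct (Bool.eqb (Nat.odd q) b) eqn:E; [reflexivity|]. symmetry. exact (Hsupp p' q E).
Qed.

Lemma expect_split (psi : vec2) (M : vec2 -> vec2) (A B C D : nat -> Cx) (la lb lc ld : Cx) :
  (forall p q, Cmul (Cconj (psi p q)) (M psi p q) = Cadd (Cmul (A p) (B q)) (Cmul (C p) (D q))) ->
  Ccv (fun N => Csum A N) la -> Ccv (fun N => Csum B N) lb ->
  Ccv (fun N => Csum C N) lc -> Ccv (fun N => Csum D N) ld ->
  expect_is psi M (Cadd (Cmul la lb) (Cmul lc ld)).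
Proof.
  intros H HA HB HC HD. unfold expect_is.
  eapply (Ccv_ext (fun N => Cadd (Cmul (Csum A N) (Csum B N)) (Cmul (Csum C N) (Csum D N))));
    [|reflexivity|apply Ccv_add; apply Ccv_mul; auto].
  intro N. rewrite <- !Csum_prod, <- Csum_add. apply Csum_ext. intro p.
  rewrite <- Csum_add. apply Csum_ext. intro q. auto.
Qed.

Section Measurement.
Variables (al : Cx) (P0 P1 : vec -> vec).
Local Notation bt := (beta al).
Hypothesis meas : proj_meas P0 P1.
Hypothesis P1_beta : forall n, P1 (coh bt) n = coh bt n.
Hypothesis P0_psiperp : forall n, P0 (psiperp al) n = psiperp al n.

Let r := Cnorm2 bt.
Let E := exp (- 2 * r).
(* Bob's weights are [a0 + a0 sg (-1)^q], with [sg = (-1)^(x+y)]. *)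
Let a0 := 2 * (out_amp al * out_amp al).
Let sg (x y : bool) := sgnR x * sgnR y.

Lemma psiperp_perp_state : psiperp al = perp_state bt.
Proof. apply functional_extensionality. intro n. unfold perp_state, vcomb, psiperp. Csolve. Qed.

(* Both states have finite norm, so Alice's projectors act linearly on them. *)
Lemma l2_coh : l2 (coh bt).
Proof. exact (l2_of_pairing _ _ (parity_coh_coh bt 1 0)). Qed.

Lemma l2_perp : l2 (perp_state bt).
Proof. exact (l2_of_pairing _ _ (perp_perp_parity bt 1 0)). Qed.

(* By completeness [P0 + P1 = 1], each outcome annihilates the other's eigenvector. *)
Lemma P0_coh (n : nat) : P0 (coh bt) n = C0.
Proof.
  destruct meas as [_ [_ Hsum]]. pose proof (Hsum _ l2_coh n) as H.
  rewrite P1_beta in H.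
  apply Cx_eq; [apply (f_equal Re) in H | apply (f_equal Im) in H];
    cbn [Re Im Cadd C0 RtoC] in *; lra.
Qed.

Lemma P1_perp (n : nat) : P1 (perp_state bt) n = C0.
Proof.
  destruct meas as [_ [_ Hsum]]. pose proof (Hsum _ l2_perp n) as H.
  rewrite <- psiperp_perp_state in H |- *. rewrite P0_psiperp in H.
  apply Cx_eq; [apply (f_equal Re) in H | apply (f_equal Im) in H];
    cbn [Re Im Cadd C0 RtoC] in *; lra.
Qed.

Lemma alice_outcomes (c1 c2 : Cx) (p : nat) :
  P0 (vcomb c1 (perp_state bt) c2 (coh bt)) p = Cmul c1 (perp_state bt p) /\
  P1 (vcomb c1 (perp_state bt) c2 (coh bt)) p = Cmul c2 (coh bt p).
Proof.
  destruct meas as [HP0 [HP1 _]].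
  rewrite !projection_comb by (auto using l2_perp, l2_coh).
  rewrite P0_coh, P1_perp, <- psiperp_perp_state, P0_psiperp, psiperp_perp_state, P1_beta.
  split; Csolve.
Qed.

Lemma output_column (x y : bool) (q : nat) :
  (fun p => BS (NOON (xi_pa al) x y) p q) =
  vcomb (Cmul (RtoC (out_amp al * branch_sign x y q)) (coh bt q)) (perp_state bt)
        (Cmul (RtoC (out_amp al * branch_sign x y q)) (plus_state bt q)) (coh bt).
Proof.
  apply functional_extensionality. intro p. rewrite BS_output. unfold vcomb. Csolve.
Qed.

Lemma measured_state (a x y : bool) (p q : nat) :
  tensor (if a then P1 else P0) (parityP (xorb x y)) (BS (NOON (xi_pa al) x y)) p q =
  if a then Cmul (Cmul (RtoC (out_amp al * branch_sign x y q)) (plus_state bt q)) (coh bt p)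
  else Cmul (Cmul (RtoC (out_amp al * branch_sign x y q)) (coh bt q)) (perp_state bt p).
Proof.
  rewrite tensor_parity_support, output_column.
  - destruct a; apply alice_outcomes.
  - intros p' q' Hq. rewrite BS_output, branch_sign_parity by exact Hq. Csolve.
Qed.

Lemma bob_weight (x y : bool) (q : nat) :
  out_amp al * branch_sign x y q * (out_amp al * branch_sign x y q) =
  parity_weight a0 (a0 * sg x y) q.
Proof.
  unfold parity_weight, a0, sg.
  transitivity (out_amp al * out_amp al * (branch_sign x y q * branch_sign x y q)); [ring|].
  rewrite branch_sign_sq. ring.
Qed.

(** Outcome [(0, x xor y)]: probability [<perp|perp> <beta|w|beta> = a0 (1 + sg E)]. *)
Lemma prob_outcome0 (x y : bool) :
  Prob al P0 P1 false (xorb x y) x y (RtoC (a0 + a0 * sg x y * E)).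
Proof.
  unfold Prob.
  eapply Ccv_ext; [reflexivity| |eapply expect_split;
    [| exact (perp_perp_parity bt 1 0) | exact (parity_coh_coh bt a0 (a0 * sg x y))
     | exact (coh_perp_parity bt 1 0) | exact (plus_coh_parity bt a0 (a0 * sg x y))]].
  - unfold E, r. Csolve.
  - intros p q. pose proof (measured_state false x y p q) as Hm. cbv iota in Hm.
    rewrite Hm, BS_output.
    rewrite <- bob_weight. unfold parity_weight. Csolve.
Qed.

(** Outcome [(1, x xor y)]: probability [<beta|beta> <plus|w|plus> = a0 (1 + 4 r - sg E)]. *)
Lemma prob_outcome1 (x y : bool) :
  Prob al P0 P1 true (xorb x y) x y (RtoC (a0 * (1 + 4 * r) - a0 * sg x y * E)).
Proof.
  unfold Prob.
  eapply Ccv_ext; [reflexivity| |eapply expect_split;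
    [| exact (perp_coh_parity bt 1 0) | exact (coh_plus_parity bt a0 (a0 * sg x y))
     | exact (parity_coh_coh bt 1 0) | exact (plus_plus_parity bt a0 (a0 * sg x y))]].
  - unfold E, r. Csolve.
  - intros p q. pose proof (measured_state true x y p q) as Hm. cbv iota in Hm.
    rewrite Hm, BS_output.
    rewrite <- bob_weight. unfold parity_weight. Csolve.
Qed.

Lemma out_amp_weight : a0 = / (2 * (1 + Cnorm2 al)).
Proof.
  unfold a0, out_amp. pose proof (Cnorm2_nonneg al) as HA.
  pose proof (sqrt_lt_R0 (1 + Cnorm2 al) ltac:(lra)) as Hs.
  pose proof (sqrt_sqrt (1 + Cnorm2 al) ltac:(lra)) as Hs2.
  set (s := sqrt (1 + Cnorm2 al)) in *. clearbody s. rewrite <- Hs2. field. lra.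
Qed.

Lemma beta_parity : E = exp (- Cnorm2 al).
Proof. unfold E, r. rewrite beta_norm. f_equal. field. Qed.

Lemma prob_equal_settings (x : bool) :
  Prob al P0 P1 false false x x
    (RtoC ((1 + exp (- Cnorm2 al)) / (2 * (1 + Cnorm2 al)))).
Proof.
  pose proof (Cnorm2_nonneg al) as HA. pose proof (prob_outcome0 x x) as H.
  rewrite Bool.xorb_nilpotent, out_amp_weight, beta_parity in H.
  replace (sg x x) with 1 in H by (unfold sg; destruct x; simpl; ring).
  replace ((1 + exp (- Cnorm2 al)) / (2 * (1 + Cnorm2 al))) with
    (/ (2 * (1 + Cnorm2 al)) + / (2 * (1 + Cnorm2 al)) * 1 * exp (- Cnorm2 al))
    by (field; lra).
  exact H.
Qed.

Lemma prob_opposite_settings (x : bool) :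
  Prob al P0 P1 true true x (negb x)
    (RtoC ((1 + 2 * Cnorm2 al + exp (- Cnorm2 al)) / (2 * (1 + Cnorm2 al)))).
Proof.
  pose proof (Cnorm2_nonneg al) as HA. pose proof (prob_outcome1 x (negb x)) as H.
  replace (xorb x (negb x)) with true in H by (destruct x; reflexivity).
  rewrite out_amp_weight, beta_parity in H. unfold r in H. rewrite beta_norm in H.
  replace (sg x (negb x)) with (-1) in H by (unfold sg; destruct x; simpl; ring).
  replace ((1 + 2 * Cnorm2 al + exp (- Cnorm2 al)) / (2 * (1 + Cnorm2 al))) with
    (/ (2 * (1 + Cnorm2 al)) * (1 + 4 * (Cnorm2 al / 2)) -
     / (2 * (1 + Cnorm2 al)) * -1 * exp (- Cnorm2 al))
    by (field; lra).
  exact H.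
Qed.
End Measurement.

Theorem mainTheorem4 (al : Cx) (P0 P1 : vec -> vec) :
  al <> C0 ->
  proj_meas P0 P1 ->
  (forall n, P1 (coh (beta al)) n = coh (beta al) n) ->
  (forall n, P0 (psiperp al) n = psiperp al n) ->
  Prob al P0 P1 false false false false
    (RtoC ((1 + exp (- Cnorm2 al)) / (2 * (1 + Cnorm2 al)))) /\
  Prob al P0 P1 false false true true
    (RtoC ((1 + exp (- Cnorm2 al)) / (2 * (1 + Cnorm2 al)))) /\
  Prob al P0 P1 true true false true
    (RtoC ((1 + 2 * Cnorm2 al + exp (- Cnorm2 al)) / (2 * (1 + Cnorm2 al)))) /\
  Prob al P0 P1 true true true false
    (RtoC ((1 + 2 * Cnorm2 al + exp (- Cnorm2 al)) / (2 * (1 + Cnorm2 al)))) /\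
  J_is al P0 P1 (RtoC (1 / 2 + exp (- Cnorm2 al) / (2 * (1 + Cnorm2 al)))) /\
  1 / 2 + exp (- Cnorm2 al) / (2 * (1 + Cnorm2 al)) > 1 / 2.
Proof.
  intros _ meas P1_beta P0_psiperp.
  pose proof (Cnorm2_nonneg al) as HA.
  pose proof (prob_equal_settings al P0 P1 meas P1_beta P0_psiperp) as Hequal.
  pose proof (prob_opposite_settings al P0 P1 meas P1_beta P0_psiperp) as Hopposite.
  split; [exact (Hequal false)|]. split; [exact (Hequal true)|].
  split; [exact (Hopposite false)|]. split; [exact (Hopposite true)|]. split.
  - exists (RtoC ((1 + exp (- Cnorm2 al)) / (2 * (1 + Cnorm2 al)))),
      (RtoC ((1 + exp (- Cnorm2 al)) / (2 * (1 + Cnorm2 al)))),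
      (RtoC ((1 + 2 * Cnorm2 al + exp (- Cnorm2 al)) / (2 * (1 + Cnorm2 al)))),
      (RtoC ((1 + 2 * Cnorm2 al + exp (- Cnorm2 al)) / (2 * (1 + Cnorm2 al)))).
    split; [exact (Hequal false)|]. split; [exact (Hequal true)|].
    split; [exact (Hopposite false)|]. split; [exact (Hopposite true)|].
    Csplit; [field; lra | ring].
  - pose proof (exp_pos (- Cnorm2 al)).
    assert (0 < exp (- Cnorm2 al) / (2 * (1 + Cnorm2 al))) by (apply Rdiv_lt_0_compat; lra).
    lra.
Qed.
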